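(* Let $A = A_s + A_i\epsilon\in\mathbb{DR}^{m\times n}$ with $A_s\in\mathbb{R}^{m\times n}$ of full column rank, and let $A = (Q_s + Q_i\epsilon)(R_s + R_i\epsilon)$ be a thin QR decomposition of $A$, i.e. $Q = Q_s+Q_i\epsilon\in\mathbb{DR}^{m\times n}$ satisfies $Q^{\top}Q = I_n$ and $R = R_s+R_i\epsilon\in\mathbb{DR}^{n\times n}$ is upper triangular with $R_s$ having positive diagonal entries. Then the dual Moore–Penrose generalized inverse of $A$ exists and equals $$A^{\dagger} = R_s^{-1}Q_s^{\top} + \big(R_s^{-1}Q_i^{\top} - R_s^{-1}R_iR_s^{-1}Q_s^{\top}\big)\epsilon.$$
   Context: A dual number is $a = a_s + a_i\epsilon$ with $a_s,a_i\in\mathbb{R}$, where $\epsilon^2=0$, $\epsilon\neq 0$; $\mathbb{DR}^{m\times n}$ denotes the set of dual matrices $A = A_s + A_i\epsilon$ with $A_s, A_i\in\mathbb{R}^{m\times n}$. Products use $\epsilon^2=0$: $(A_s+A_i\epsilon)(B_s+B_i\epsilon) = A_sB_s + (A_sB_i + A_iB_s)\epsilon$; transpose is $A^{\top}=A_s^{\top}+A_i^{\top}\epsilon$. A dual matrix is upper triangular if both parts are. The dual Moore–Penrose generalized inverse (DMPGI) of $A\in\mathbb{DR}^{m\times n}$ is a dual matrix $X\in\mathbb{DR}^{n\times m}$ satisfying $AXA = A$, $XAX = X$, $(AX)^{\top} = AX$, $(XA)^{\top} = XA$; it is denoted $A^{\dagger}$. *)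

(* Dual real matrices A = A_s + A_i eps represented by their two parts. *)
From HB Require Import structures.
From mathcomp Require Import all_boot all_order all_algebra.
From mathcomp Require Import reals.
Set Implicit Arguments. Unset Strict Implicit. Unset Printing Implicit Defensive.
Import Order.TTheory GRing.Theory Num.Theory.
Local Open Scope ring_scope.

Record dmx (R : realType) (m n : nat) := DMx { dstd : 'M[R]_(m, n); dinf : 'M[R]_(m, n) }.

(* product using eps^2 = 0 *)
Definition dmul (R : realType) (m n p : nat) (A : dmx R m n) (B : dmx R n p) : dmx R m p :=
  DMx (dstd A *m dstd B) (dstd A *m dinf B + dinf A *m dstd B).

Definition dtr (R : realType) (m n : nat) (A : dmx R m n) : dmx R n m :=
  DMx (dstd A)^T (dinf A)^T.

Definition did (R : realType) (n : nat) : dmx R n n := DMx 1%:M 0.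

Definition upper_tri (R : realType) (n : nat) (M : 'M[R]_n) : Prop :=
  forall i j : 'I_n, (j < i)%N -> M i j = 0.

Definition dupper_tri (R : realType) (n : nat) (M : dmx R n n) : Prop :=
  upper_tri (dstd M) /\ upper_tri (dinf M).

Definition is_DMPGI (R : realType) (m n : nat) (A : dmx R m n) (X : dmx R n m) : Prop :=
  [/\ dmul (dmul A X) A = A,
      dmul (dmul X A) X = X,
      dtr (dmul A X) = dmul A X
    & dtr (dmul X A) = dmul X A].

(* The dual matrix R is invertible because its standard part is (A_s = Q_s R_s
   has rank n), with inverse R_s^-1 - R_s^-1 R_i R_s^-1 eps, and the claimed X is
   exactly R^-1 Q^T. Since Q^T Q = I, X is a left inverse of A = Q R and
   A X = Q Q^T is symmetric, which gives the four Penrose equations. Uniqueness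
   is the classical Penrose argument, which only uses associativity and the
   anti-multiplicativity of transposition, hence holds verbatim for dual
   matrices. *)
From HB Require Import structures.
From mathcomp Require Import all_boot all_order all_algebra.
From mathcomp Require Import reals.
Set Implicit Arguments. Unset Strict Implicit. Unset Printing Implicit Defensive.
Import Order.TTheory GRing.Theory Num.Theory.
Local Open Scope ring_scope.

Lemma unitmx_of_rank_mulmx (F : fieldType) (m n : nat)
    (P : 'M[F]_(m, n)) (M : 'M[F]_n) :
  \rank (P *m M) = n -> M \in unitmx.
Proof.
move=> rkPM; rewrite -row_free_unit /row_free eqn_leq rank_leq_row.
by rewrite -[X in (X <= _)%N]rkPM mxrankM_maxr.
Qed.

Section DualMatrices.
Variable R : realType.

Lemma dmx_ext m n (A B : dmx R m n) : dstd A = dstd B -> dinf A = dinf B -> A = B.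
Proof. by case: A; case: B => /= ? ? ? ? -> ->. Qed.

Lemma dmulA m n p q (A : dmx R m n) (B : dmx R n p) (C : dmx R p q) :
  dmul A (dmul B C) = dmul (dmul A B) C.
Proof.
apply: dmx_ext => /=; first by rewrite mulmxA.
by rewrite !mulmxDr !mulmxDl !mulmxA addrA.
Qed.

Lemma dmul1 m n (A : dmx R m n) : dmul A (did R n) = A.
Proof. by apply: dmx_ext; rewrite /= ?mulmx1 ?mulmx0 ?add0r. Qed.

Lemma dmul1l m n (A : dmx R m n) : dmul (did R m) A = A.
Proof. by apply: dmx_ext; rewrite /= ?mul1mx ?mul0mx ?addr0. Qed.

Lemma dtr_mul m n p (A : dmx R m n) (B : dmx R n p) :
  dtr (dmul A B) = dmul (dtr B) (dtr A).
Proof.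
apply: dmx_ext => /=; first by rewrite trmx_mul.
by rewrite linearD /= !trmx_mul addrC.
Qed.

Lemma dtrK m n (A : dmx R m n) : dtr (dtr A) = A.
Proof. by apply: dmx_ext; rewrite /= trmxK. Qed.

Lemma dtr1 n : dtr (did R n) = did R n.
Proof. by apply: dmx_ext; rewrite /= ?trmx1 ?trmx0. Qed.

Definition dinv n (M : dmx R n n) : dmx R n n :=
  DMx (invmx (dstd M)) (- (invmx (dstd M) *m dinf M *m invmx (dstd M))).

Lemma dmulV n (M : dmx R n n) : dstd M \in unitmx -> dmul M (dinv M) = did R n.
Proof.
move=> uM; apply: dmx_ext => /=; first by rewrite mulmxV.
by rewrite mulmxN !mulmxA mulmxV // mul1mx addNr.
Qed.

Lemma dmulVl n (M : dmx R n n) : dstd M \in unitmx -> dmul (dinv M) M = did R n.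
Proof.
move=> uM; apply: dmx_ext => /=; first by rewrite mulVmx.
by rewrite mulNmx -[_ *m dstd M]mulmxA mulVmx // mulmx1 addrN.
Qed.

Lemma DMPGI_unique m n (A : dmx R m n) (X Y : dmx R n m) :
  is_DMPGI A X -> is_DMPGI A Y -> Y = X.
Proof.
case=> [AXA XAX symAX symXA] [AYA YAY symAY symYA].
have trA_AX : dtr A = dmul (dtr A) (dmul A X).
  by rewrite -symAX -dtr_mul AXA.
have trA_YA : dtr A = dmul (dmul Y A) (dtr A).
  by rewrite -symYA -dtr_mul dmulA AYA.
have eY : Y = dmul (dmul Y A) X.
  transitivity (dmul Y (dmul (dtr Y) (dtr A))).
    by rewrite -dtr_mul symAY dmulA YAY.
  by rewrite trA_AX (dmulA (dtr Y)) -dtr_mul symAY !dmulA YAY.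
have eX : X = dmul (dmul Y A) X.
  transitivity (dmul (dmul (dtr A) (dtr X)) X).
    by rewrite -dtr_mul symXA XAX.
  rewrite trA_YA -(dmulA (dmul Y A)) -dtr_mul symXA.
  by rewrite -!dmulA (dmulA X A X) XAX.
by rewrite eY -eX.
Qed.

Lemma is_DMPGI_left_inverse m n (A : dmx R m n) (X : dmx R n m) :
  dmul X A = did R n -> dtr (dmul A X) = dmul A X -> is_DMPGI A X.
Proof.
move=> XA symAX; split=> //.
- by rewrite -dmulA XA dmul1.
- by rewrite XA dmul1l.
- by rewrite XA dtr1.
Qed.

Lemma is_DMPGI_QR m n (Q : dmx R m n) (M : dmx R n n) :
  dmul (dtr Q) Q = did R n -> dstd M \in unitmx ->
  is_DMPGI (dmul Q M) (dmul (dinv M) (dtr Q)).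
Proof.
move=> QtQ uM; apply: is_DMPGI_left_inverse.
  by rewrite dmulA -(dmulA (dinv M)) QtQ dmul1 dmulVl.
by rewrite -dmulA (dmulA M) dmulV // dmul1l dtr_mul dtrK.
Qed.

End DualMatrices.

Theorem theorem5p1 (R : realType) (m n : nat) (A : dmx R m n)
  (Q : dmx R m n) (Rm : dmx R n n) :
  \rank (dstd A) = n ->
  A = dmul Q Rm ->
  dmul (dtr Q) Q = did R n ->
  dupper_tri Rm ->
  (forall i : 'I_n, 0 < dstd Rm i i) ->
  let X := DMx (invmx (dstd Rm) *m (dstd Q)^T)
               (invmx (dstd Rm) *m (dinf Q)^T
                - invmx (dstd Rm) *m dinf Rm *m invmx (dstd Rm) *m (dstd Q)^T) in
  is_DMPGI A X /\ (forall Y : dmx R n m, is_DMPGI A Y -> Y = X).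
Proof.
(* Triangularity and the sign of the diagonal only make the QR factors unique;
   invertibility of R_s already follows from the rank hypothesis. *)
move=> rkA eA QtQ _ _ X.
have uRm : dstd Rm \in unitmx.
  by move: rkA; rewrite eA; apply: unitmx_of_rank_mulmx.
have eX : X = dmul (dinv Rm) (dtr Q).
  by apply: dmx_ext => //=; rewrite mulNmx -!mulmxA addrC.
have XP : is_DMPGI A X by rewrite eX eA; apply: is_DMPGI_QR.
by split=> // Y YP; apply: DMPGI_unique XP YP.
Qed.
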